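(* Let $m,n$ be integers of opposite parity, and let $M'_1=2m-n$, $N'_1=m+2n$, $v=(M'_1,N'_1)$, $w=(-N'_1,M'_1)$ and $c=(v+w)/2$. For $k=1,2,3,4$ let $G'_2(k)$ be the group of plane isometries generated by the translations in the lattice $L_k$ and the quarter turn about $c$, where $L_1=\mathbb{Z}v+\mathbb{Z}w$, $L_2=\mathbb{Z}(v+w)+\mathbb{Z}(v-w)$, $L_3=2L_1$, $L_4=2L_2$. Let $G_2$ be the isometry group of the $(5,3)$ satin with $M_1=2$, $N_1=1$, namely the group generated by the translations in the lattice $\mathbb{Z}(2,1)+\mathbb{Z}(-1,2)$ and the quarter turn about the origin. Then $G'_2(k)$ is a subgroup of $G_2$ for each $k=1,2,3,4$.
   Context: The groups are the isometry groups (type $p4$) attached to square lattice units: a level-1 lattice unit is the square with corners $0$, $v$, $v+w$, $w$ (quarter-turn centres at corners and centre, half-turn centres at mid-sides); the level-2 unit is the square with the same centre escribing it (side vectors $v+w$, $v-w$); levels 3 and 4 are the level-1 and level-2 units doubled in size about the same centre. The level-1 unit of the $(5,3)$ satin's isometry group is the square on side vectors $(2,1)$ and $(-1,2)$ with a corner at the origin, and the larger lattice unit based on $(M'_1,N'_1)$ is placed with its first corner at the origin, a corner of the satin's lattice units. *)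

From Stdlib Require Import Reals ZArith.
Open Scope R_scope.

Definition pt := (R * R)%type.

Definition vadd (p q : pt) : pt := (fst p + fst q, snd p + snd q).
Definition vsub (p q : pt) : pt := (fst p - fst q, snd p - snd q).
Definition vscale (a : R) (p : pt) : pt := (a * fst p, a * snd p).

Definition translation (t : pt) : pt -> pt := fun p => vadd p t.

Definition rot90 (p : pt) : pt := (- snd p, fst p).
Definition quarter_turn (c : pt) : pt -> pt :=
  fun p => vadd c (rot90 (vsub p c)).

Definition lattice (u1 u2 : pt) : pt -> Prop :=
  fun t => exists a b : Z, t = vadd (vscale (IZR a) u1) (vscale (IZR b) u2).

Inductive generated (S : (pt -> pt) -> Prop) : (pt -> pt) -> Prop :=
| gen_base f : S f -> generated S f
| gen_id : generated S (fun p => p)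
| gen_comp f g : generated S f -> generated S g ->
    generated S (fun p => f (g p))
| gen_inv f g : generated S f ->
    (forall p, g (f p) = p) -> (forall p, f (g p) = p) -> generated S g.

Definition trans_rot_group (L : pt -> Prop) (c : pt) : (pt -> pt) -> Prop :=
  generated (fun f => (exists t, L t /\ f = translation t) \/ f = quarter_turn c).

Definition M1' (m n : Z) : Z := (2 * m - n)%Z.
Definition N1' (m n : Z) : Z := (m + 2 * n)%Z.
Definition vv (m n : Z) : pt := (IZR (M1' m n), IZR (N1' m n)).
Definition ww (m n : Z) : pt := (- IZR (N1' m n), IZR (M1' m n)).
Definition cc (m n : Z) : pt := vscale (/ 2) (vadd (vv m n) (ww m n)).

Definition Lk (m n : Z) (k : nat) : pt -> Prop :=
  let v := vv m n in let w := ww m n in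
  match k with
  | 1%nat => lattice v w
  | 2%nat => lattice (vadd v w) (vsub v w)
  | 3%nat => lattice (vscale 2 v) (vscale 2 w)
  | _ => lattice (vscale 2 (vadd v w)) (vscale 2 (vsub v w))
  end.

Definition G2' (m n : Z) (k : nat) : (pt -> pt) -> Prop :=
  trans_rot_group (Lk m n k) (cc m n).

Definition G2 : (pt -> pt) -> Prop :=
  trans_rot_group (lattice (2, 1) (-1, 2)) (0, 0).

(* The translations of every L_k lie in L_1 = Z v + Z w, and v = m (2,1) + n (-1,2), w = -n (2,1) + m (-1,2), so they
   lie in the satin lattice.  A quarter turn about c is the quarter turn about the origin followed by the translation
   by c - rot90 c, and for c = (v + w) / 2 with w = rot90 v this vector is v, again a satin translation. *)
From Stdlib Require Import Reals ZArith FunctionalExtensionality.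
Open Scope R_scope.

Lemma generated_sub (S T : (pt -> pt) -> Prop) :
  (forall f, S f -> generated T f) -> forall f, generated S f -> generated T f.
Proof.
  intros HST f Hf; induction Hf.
  - now apply HST.
  - apply gen_id.
  - now apply gen_comp.
  - now apply gen_inv with f.
Qed.

Section Lattice.

Variables u1 u2 : pt.

Lemma lattice_add (x y : pt) : lattice u1 u2 x -> lattice u1 u2 y -> lattice u1 u2 (vadd x y).
Proof.
  intros [a [b ->]] [c [d ->]]; exists (a + c)%Z, (b + d)%Z.
  unfold vadd, vscale; simpl; rewrite !plus_IZR; f_equal; ring.
Qed.

Lemma lattice_zscale (z : Z) (x : pt) : lattice u1 u2 x -> lattice u1 u2 (vscale (IZR z) x).
Proof.
  intros [a [b ->]]; exists (z * a)%Z, (z * b)%Z.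
  unfold vadd, vscale; simpl; rewrite !mult_IZR; f_equal; ring.
Qed.

Lemma lattice_vsub (x y : pt) : lattice u1 u2 x -> lattice u1 u2 y -> lattice u1 u2 (vsub x y).
Proof.
  intros Hx Hy.
  replace (vsub x y) with (vadd x (vscale (IZR (-1)) y)).
  - now apply lattice_add; [|apply lattice_zscale].
  - destruct x, y; unfold vadd, vsub, vscale; simpl; f_equal; ring.
Qed.

Lemma lattice_gen1 : lattice u1 u2 u1.
Proof. exists 1%Z, 0%Z; destruct u1, u2; unfold vadd, vscale; simpl; f_equal; ring. Qed.

Lemma lattice_gen2 : lattice u1 u2 u2.
Proof. exists 0%Z, 1%Z; destruct u1, u2; unfold vadd, vscale; simpl; f_equal; ring. Qed.

Lemma lattice_subset (w1 w2 : pt) :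
  lattice u1 u2 w1 -> lattice u1 u2 w2 -> forall t, lattice w1 w2 t -> lattice u1 u2 t.
Proof. intros H1 H2 t [a [b ->]]; now apply lattice_add; apply lattice_zscale. Qed.

End Lattice.

Lemma quarter_turn_shift (c c' : pt) :
  quarter_turn c =
  fun p => translation (vsub (vsub c c') (rot90 (vsub c c'))) (quarter_turn c' p).
Proof.
  apply functional_extensionality; intros [x y]; destruct c, c'.
  unfold quarter_turn, translation, vadd, vsub, rot90; simpl; f_equal; ring.
Qed.

Lemma trans_rot_group_sub (L L' : pt -> Prop) (c c' : pt) :
  (forall t, L t -> L' t) -> L' (vsub (vsub c c') (rot90 (vsub c c'))) ->
  forall f, trans_rot_group L c f -> trans_rot_group L' c' f.
Proof.
  intros HLL' Hshift; apply generated_sub; intros f [[t [Ht ->]] | ->].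
  - apply gen_base; left; eauto.
  - rewrite (quarter_turn_shift c c').
    apply (gen_comp _ (translation _) (quarter_turn c')); apply gen_base; eauto.
Qed.

Definition satin_lattice : pt -> Prop := lattice (2, 1) (-1, 2).

Lemma satin_lattice_vv (m n : Z) : satin_lattice (vv m n).
Proof.
  exists m, n; unfold vv, M1', N1', vadd, vscale; cbv [fst snd].
  rewrite minus_IZR, plus_IZR, !mult_IZR; f_equal; ring.
Qed.

Lemma satin_lattice_ww (m n : Z) : satin_lattice (ww m n).
Proof.
  exists (- n)%Z, m; unfold ww, M1', N1', vadd, vscale; cbv [fst snd].
  rewrite minus_IZR, plus_IZR, !mult_IZR, opp_IZR; f_equal; ring.
Qed.

Lemma Lk_sub_L1 (m n : Z) (k : nat) (t : pt) : Lk m n k t -> Lk m n 1 t.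
Proof.
  set (v := vv m n); set (w := ww m n); simpl; fold v w.
  assert (Hv := lattice_gen1 v w); assert (Hw := lattice_gen2 v w).
  destruct k as [|[|[|[|k]]]]; try easy; apply lattice_subset;
    repeat first [apply (lattice_zscale _ _ 2) | apply lattice_add | apply lattice_vsub | assumption].
Qed.

Lemma cc_shift (m n : Z) : vsub (vsub (cc m n) (0, 0)) (rot90 (vsub (cc m n) (0, 0))) = vv m n.
Proof. unfold cc, vv, ww, vadd, vsub, vscale, rot90; simpl; f_equal; field. Qed.

Theorem theorem3 (m n : Z) (hpar : Z.odd m <> Z.odd n) (k : nat)
  (hk : (1 <= k <= 4)%nat) :
  forall f : pt -> pt, G2' m n k f -> G2 f.
Proof.
  apply trans_rot_group_sub.
  - intros t Ht; apply (lattice_subset _ _ _ _ (satin_lattice_vv m n) (satin_lattice_ww m n)).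
    exact (Lk_sub_L1 m n k t Ht).
  - rewrite cc_shift; apply satin_lattice_vv.
Qed.
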